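(* Let $\underline{X}=(X_n,p_n)$ be an inverse sequence of sets, $(T_{\underline{X}},v)$ its tree and $T_\infty\subset T_{\underline{X}}$ its maximal geodesically complete subtree. Then $\underline{X}$ is Mittag-Leffler if and only if there is a rooted metrically proper homotopy equivalence between $T_{\underline{X}}$ and $T_\infty$. Moreover, the homotopy can be chosen to be a deformation retraction of $T_{\underline{X}}$ onto $T_\infty$.
   Context: An inverse sequence of sets $(X_n,p_n)_{n\ge1}$ has maps $p_n:X_{n+1}\to X_n$; $p_{nm}=p_n\circ\cdots\circ p_{m-1}:X_m\to X_n$. It is Mittag-Leffler if for every $n_0$ there is $n_1>n_0$ such that $p_{n_0n}(X_n)=p_{n_0n_1}(X_{n_1})$ for all $n>n_1$. Its tree $T_{\underline{X}}$ is the geometric realization of the graph with vertices $\{v\}\sqcup\bigsqcup_nX_n$ and edges $\{x,p_n(x)\}$ ($x\in X_{n+1}$) and $\{x,v\}$ ($x\in X_1$), edges of length 1, path metric, rooted at $v$. The maximal geodesically complete subtree $T_\infty$ is the union of $\{v\}$ and the images of all isometric embeddings $F:[0,\infty)\to T_{\underline{X}}$ with $F(0)=v$, rooted at $v$. A map between rooted trees is rooted if it sends root to root, metrically proper if preimages of bounded sets are bounded. A rooted metrically proper homotopy between rooted continuous metrically proper maps $f,f':(T,v)\to(T',w)$ is a continuous $H:T\times[0,1]\to T'$ with $H(\cdot,0)=f$, $H(\cdot,1)=f'$, $H(v,s)=w$ for all $s$, and for every $M>0$ some $N>0$ with $H^{-1}(B(w,M))\subset B(v,N)\times[0,1]$ (open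 balls). A rooted metrically proper homotopy equivalence is a pair of rooted continuous metrically proper maps $f:T\to T'$, $g:T'\to T$ with $g\circ f$ and $f\circ g$ rooted metrically proper homotopic to the identities. A deformation retraction here means a rooted metrically proper homotopy $H$ from the identity of $T_{\underline{X}}$ to a retraction onto $T_\infty$ with $H(x,s)=x$ for all $x\in T_\infty$, $s\in[0,1]$. *)

From Stdlib Require Import Reals ClassicalEpsilon.
Open Scope R_scope.

Section InverseSequenceTree.

Context (X : nat -> Type) (p : forall n, X (S n) -> X n).

(* Vertices of the tree other than the root: elements of the X_n. *)
Definition vtx : Type := {n : nat & X n}.

Definition lvl (v : vtx) : nat := projT1 v.

(* parent vertex (for level 0 the parent is the root; we return v itself,
   this value is never used) *)
Definition par (v : vtx) : vtx :=
  match v with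
  | existT _ n x =>
      match n return X n -> vtx with
      | O => fun x => existT X O x
      | S m => fun x => existT X m (p m x)
      end x
  end.

(* ancestor of v at level k (for k <= lvl v): p_{k,lvl v}(v) *)
Definition anc (k : nat) (v : vtx) : vtx := Nat.iter (lvl v - k) par v.

(* Mittag-Leffler: for every n0 there is n1 > n0 with
   p_{n0 n}(X_n) = p_{n0 n1}(X_{n1}) for all n > n1. *)
Definition MittagLeffler : Prop :=
  forall n0 : nat, exists n1 : nat, (n0 < n1)%nat /\
    forall n : nat, (n1 < n)%nat ->
      forall w : vtx,
        (exists x : X n, anc n0 (existT X n x) = w) <->
        (exists x : X n1, anc n0 (existT X n1 x) = w).

(* The root v is [Root];
   [Pt x t] (x in X_n, 0 < t <= 1) is the point on the edge joining x to its
   parent (p_{n-1}(x), or the root if n = 0) at distance 1 - t from x, i.e. at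
   height n + t above the root.  The vertex x itself is [Pt x 1]. *)
Inductive pt : Type :=
  | Root : pt
  | Pt : vtx -> {t : R | 0 < t <= 1} -> pt.

Definition height (a : pt) : R :=
  match a with
  | Root => 0
  | Pt x t => INR (lvl x) + proj1_sig t
  end.

Fixpoint common_cnt (x y : vtx) (k0 : nat) : nat :=
  match k0 with
  | O => O
  | S k => (common_cnt x y k +
            (if excluded_middle_informative (anc k x = anc k y) then 1 else 0))%nat
  end.

(* height of the deepest common ancestor vertex of x and y (0 = root) *)
Definition meet_height (x y : vtx) : R :=
  INR (common_cnt x y (S (Nat.min (lvl x) (lvl y)))).

(* path metric of the tree (edges of length 1):
   d(a,b) = h(a) + h(b) - 2 h(a /\ b) *)
Definition dist (a b : pt) : R :=
  match a, b with
  | Root, Root => 0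
  | Root, _ => height b
  | _, Root => height a
  | Pt x _, Pt y _ =>
      height a + height b
      - 2 * Rmin (meet_height x y) (Rmin (height a) (height b))
  end.

Definition Tall : pt -> Prop := fun _ => True.

(* maximal geodesically complete subtree: root together with the images of
   all isometric embeddings F : [0,oo) -> T_X with F 0 = root *)
Definition Tinf : pt -> Prop := fun a =>
  a = Root \/
  exists F : R -> pt,
    F 0 = Root /\
    (forall s t, 0 <= s -> 0 <= t -> dist (F s) (F t) = Rabs (s - t)) /\
    exists s, 0 <= s /\ F s = a.

Definition cont_on (A : pt -> Prop) (f : pt -> pt) : Prop :=
  forall x, A x -> forall eps, 0 < eps -> exists delta, 0 < delta /\
    forall y, A y -> dist x y < delta -> dist (f x) (f y) < eps.

Definition bounded (S : pt -> Prop) : Prop :=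
  exists M, forall y z, S y -> S z -> dist y z <= M.

Definition metr_proper_on (A : pt -> Prop) (f : pt -> pt) : Prop :=
  forall S : pt -> Prop, bounded S -> bounded (fun x => A x /\ S (f x)).

Definition rooted_map (A B : pt -> Prop) (f : pt -> pt) : Prop :=
  (forall x, A x -> B (f x)) /\ f Root = Root /\
  cont_on A f /\ metr_proper_on A f.

Definition rooted_mp_homotopy (A B : pt -> Prop) (H : pt -> R -> pt)
    (f g : pt -> pt) : Prop :=
  (forall x s, A x -> 0 <= s <= 1 -> B (H x s)) /\
  (forall x, A x -> H x 0 = f x) /\
  (forall x, A x -> H x 1 = g x) /\
  (forall s, 0 <= s <= 1 -> H Root s = Root) /\
  (forall x s, A x -> 0 <= s <= 1 -> forall eps, 0 < eps ->
     exists delta, 0 < delta /\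
     forall y r, A y -> 0 <= r <= 1 -> dist x y < delta -> Rabs (s - r) < delta ->
       dist (H x s) (H y r) < eps) /\
  (forall M, 0 < M -> exists N, 0 < N /\
     forall x s, A x -> 0 <= s <= 1 -> dist Root (H x s) < M -> dist Root x < N).

Definition rooted_mp_homotopy_equivalence : Prop :=
  exists f g : pt -> pt,
    rooted_map Tall Tinf f /\ rooted_map Tinf Tall g /\
    (exists H, rooted_mp_homotopy Tall Tall H (fun x => g (f x)) (fun x => x)) /\
    (exists H, rooted_mp_homotopy Tinf Tinf H (fun x => f (g x)) (fun x => x)).

Definition deformation_retraction : Prop :=
  exists H : pt -> R -> pt,
    rooted_mp_homotopy Tall Tall H (fun x => x) (fun x => H x 1) /\
    (forall x, Tinf (H x 1)) /\
    (forall x s, Tinf x -> 0 <= s <= 1 -> H x s = x).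

End InverseSequenceTree.

From Pilot Require Import Defs.
From Stdlib Require Import ZArith Reals Lra Lia Psatz ClassicalEpsilon Classical ProofIrrelevance.
Open Scope R_scope.

(* Call a vertex alive if it has descendants at every level; the alive
   vertices are exactly those of [T_oo].  Under Mittag-Leffler every alive
   vertex has an alive child, so it lies on a geodesic ray, and a vertex high
   enough above level [j] has an alive ancestor at level [j].  Sliding each
   point down its branch to the height where the branch leaves [T_oo] is then
   a 1-Lipschitz-in-space, metrically proper deformation retraction.
   Conversely, if Mittag-Leffler fails, arbitrarily high vertices [a] sit in a
   cone over a fixed level whose height is bounded; a proper homotopy
   [g o f ~ id] keeps [g (f a)] in that cone, whereas [g] applied along the
   ray of [T_oo] through [f a] must leave it, which bounds the height of
   [f a] and then, by properness of [f], that of [a]. *)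

Fixpoint count_upto (Q : nat -> Prop) (K : nat) : nat :=
  match K with
  | O => O
  | S k => (count_upto Q k + (if excluded_middle_informative (Q k) then 1 else 0))%nat
  end.

Lemma count_upto_le Q K : (count_upto Q K <= K)%nat.
Proof. induction K; simpl; auto. destruct excluded_middle_informative; lia. Qed.

Lemma count_upto_all Q K : (forall j, (j < K)%nat -> Q j) -> count_upto Q K = K.
Proof.
  induction K as [|K IH]; simpl; auto. intros HQ. rewrite IH by (intros; apply HQ; lia).
  destruct excluded_middle_informative as [_|n]; [lia|]. exfalso; apply n, HQ; lia.
Qed.

Lemma count_upto_ext Q Q' K :
  (forall j, (j < K)%nat -> (Q j <-> Q' j)) -> count_upto Q K = count_upto Q' K.
Proof.
  induction K as [|K IH]; simpl; auto. intros HQ. rewrite IH by (intros; apply HQ; lia).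
  destruct (excluded_middle_informative (Q K)), (excluded_middle_informative (Q' K)); auto;
    exfalso; apply n, HQ; auto.
Qed.

(* For a predicate that is downward closed below [B], [count_upto Q K] is the
   length of the initial segment of [0..K-1] on which [Q] holds. *)
Section DownwardClosed.
Variable Q : nat -> Prop.
Variable B : nat.
Hypothesis Q_down : forall i j, (i <= j)%nat -> (j < B)%nat -> Q j -> Q i.

Lemma count_upto_lt K j : (K <= B)%nat -> (j < count_upto Q K)%nat -> Q j.
Proof.
  induction K as [|K IH]; simpl; intros HK Hj. lia.
  destruct excluded_middle_informative as [q|q].
  - pose proof (count_upto_le Q K). apply (Q_down j K); auto; lia.
  - apply IH; lia.
Qed.

Lemma count_upto_le_fail K j : (K <= B)%nat -> ~ Q j -> (count_upto Q K <= j)%nat.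
Proof.
  induction K as [|K IH]; simpl; intros HK Hq. lia.
  pose proof (count_upto_le Q K).
  destruct (Nat.le_gt_cases K j), excluded_middle_informative as [q|q].
  - destruct (Nat.eq_dec K j). subst; contradiction. lia.
  - lia.
  - exfalso. apply Hq. apply (Q_down j K); auto; lia.
  - rewrite Nat.add_0_r. apply IH; auto; lia.
Qed.

Lemma count_upto_fail K : (K <= B)%nat -> (count_upto Q K < K)%nat -> ~ Q (count_upto Q K).
Proof.
  induction K as [|K IH]; simpl; intros HK Hlt. lia.
  destruct excluded_middle_informative as [q|q].
  - rewrite (count_upto_all Q K) in Hlt. lia. intros j Hj. apply (Q_down j K); auto; lia.
  - rewrite Nat.add_0_r in *. destruct (Nat.eq_dec (count_upto Q K) K) as [e|e].
    + rewrite e. auto.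
    + apply IH. lia. pose proof (count_upto_le Q K). lia.
Qed.

Lemma count_upto_min K K' : (K' <= K)%nat -> (K <= B)%nat ->
  count_upto Q K' = Nat.min (count_upto Q K) K'.
Proof.
  intros H1 H2. set (c := count_upto Q K).
  destruct (Nat.le_gt_cases K' c).
  - rewrite Nat.min_r by auto. apply count_upto_all. intros j Hj.
    apply (count_upto_lt K); auto. lia.
  - rewrite Nat.min_l by lia.
    assert (Hc : ~ Q c) by (apply count_upto_fail; [auto | lia]).
    pose proof (count_upto_le_fail K' c ltac:(lia) Hc).
    destruct (Nat.eq_dec (count_upto Q K') c) as [e|e]; auto.
    exfalso. apply (count_upto_fail K' ltac:(lia) ltac:(lia)).
    apply (count_upto_lt K); auto. lia.
Qed.
End DownwardClosed.

(* [ceil_pred h] is the integer [k] with [k < h <= k + 1], i.e. the level of the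
   edge on which a point at height [h > 0] lies. *)
Definition ceil_pred (h : R) : nat := Z.to_nat (- up (- h)).

Lemma ceil_pred_spec h : 0 < h -> INR (ceil_pred h) < h <= INR (ceil_pred h) + 1.
Proof.
  intros Hh. destruct (archimed (- h)) as [A1 A2]. unfold ceil_pred.
  assert (Hz : (up (- h) < 1)%Z) by (apply lt_IZR; lra).
  rewrite INR_IZR_INZ, Z2Nat.id by lia. rewrite opp_IZR. lra.
Qed.

Lemma ceil_pred_unique k h : INR k < h <= INR k + 1 -> ceil_pred h = k.
Proof.
  intros Hk. assert (Hh : 0 < h) by (pose proof (pos_INR k); lra).
  destruct (ceil_pred_spec h Hh).
  assert (ceil_pred h < S k)%nat by (apply INR_lt; rewrite S_INR; lra).
  assert (k < S (ceil_pred h))%nat by (apply INR_lt; rewrite S_INR; lra).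
  lia.
Qed.

Lemma ceil_pred_le k h : 0 < h -> h <= INR k + 1 -> (ceil_pred h <= k)%nat.
Proof.
  intros H1 H2. destruct (ceil_pred_spec h H1).
  assert (ceil_pred h < S k)%nat by (apply INR_lt; rewrite S_INR; lra). lia.
Qed.

Lemma nat_above (r : R) : exists n : nat, r < INR n.
Proof.
  destruct (archimed r) as [A1 _]. exists (Z.to_nat (up r)).
  destruct (Z.le_gt_cases 0 (up r)).
  - rewrite INR_IZR_INZ, Z2Nat.id by auto. lra.
  - assert (IZR (up r) < 0) by (apply IZR_lt; lia). pose proof (pos_INR (Z.to_nat (up r))). lra.
Qed.

Lemma INR_min a b : INR (Nat.min a b) = Rmin (INR a) (INR b).
Proof.
  destruct (Nat.le_ge_cases a b).
  - rewrite Nat.min_l, Rmin_left by (auto; apply le_INR; auto). auto.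
  - rewrite Nat.min_r, Rmin_right by (auto; apply le_INR; auto). auto.
Qed.

(* Connectedness of [a, b]. *)
Lemma interval_locally_constant (Q : R -> Prop) a b : a <= b ->
  (forall t, a <= t <= b -> exists d, 0 < d /\
     forall r, a <= r <= b -> Rabs (t - r) < d -> (Q t <-> Q r)) ->
  Q a -> Q b.
Proof.
  intros Hab Hloc Qa.
  set (E := fun t => a <= t <= b /\ forall r, a <= r <= t -> Q r).
  assert (Ea : E a) by (split; [lra | intros r Hr; replace r with a by lra; auto]).
  assert (Eb : bound E) by (exists b; intros t [Ht _]; lra).
  destruct (completeness E Eb (ex_intro _ a Ea)) as [c [Hc1 Hc2]].
  assert (ca : a <= c) by (apply Hc1; auto).
  assert (cb : c <= b) by (apply Hc2; intros t [Ht _]; lra).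
  destruct (Hloc c (conj ca cb)) as [d [Hd Hl]].
  assert (Ht : exists t, E t /\ c - d < t).
  { apply NNPP. intro N. assert (c <= c - d); [|lra].
    apply Hc2. intros t Et. apply Rnot_lt_le. intro. apply N. eauto. }
  destruct Ht as [t [[Ht1 Ht2] Ht3]].
  assert (tc : t <= c) by (apply Hc1; split; auto).
  assert (Qc : Q c) by (apply (Hl t); [lra | apply Rabs_def1; lra | apply Ht2; lra]).
  set (t' := Rmin (c + d/2) b).
  assert (tb : t' <= b /\ t' <= c + d/2) by (unfold t', Rmin; destruct Rle_dec; lra).
  assert (Et' : E t').
  { split. unfold t', Rmin; destruct Rle_dec; lra. intros r Hr.
    destruct (Rle_lt_dec r t). apply Ht2; lra.
    apply (Hl r). lra. apply Rabs_def1; lra. auto. }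
  assert (t' <= c) by (apply Hc1; auto).
  assert (t' = b) by (unfold t', Rmin in *; destruct Rle_dec; lra).
  destruct Et' as [_ HE]. apply HE. lra.
Qed.

Section Tree.
Context (X : nat -> Type) (p : forall n, X (S n) -> X n).
Local Notation V := (vtx X).
Local Notation pt := (pt X).
Local Notation lv := (lvl X).
Local Notation anc := (anc X p).
Local Notation height := (height X).
Local Notation tdist := (Defs.dist X p).

Lemma lvl_par v : lv (par X p v) = pred (lv v).
Proof. destruct v as [[|n] x]; reflexivity. Qed.

Lemma lvl_anc k v : (k <= lv v)%nat -> lv (anc k v) = k.
Proof.
  intros Hk. unfold Defs.anc.
  assert (E : forall n, lv (Nat.iter n (par X p) v) = (lv v - n)%nat).
  { induction n; simpl. lia. rewrite lvl_par, IHn. lia. }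
  rewrite E. lia.
Qed.

Lemma anc_lvl v : anc (lv v) v = v.
Proof. unfold Defs.anc. rewrite Nat.sub_diag. reflexivity. Qed.

Lemma anc_anc k j v : (k <= j)%nat -> (j <= lv v)%nat -> anc k (anc j v) = anc k v.
Proof.
  intros. unfold Defs.anc at 1. rewrite lvl_anc by lia. unfold Defs.anc.
  rewrite <- Nat.iter_add. f_equal. lia.
Qed.

Lemma vtx_of_lvl (y : V) n : lv y = n -> exists x : X n, y = existT X n x.
Proof. destruct y as [m x]. simpl. intros ->. eauto. Qed.

Lemma anc_eq_down x y i j : (i <= j)%nat -> (j <= Nat.min (lv x) (lv y))%nat ->
  anc j x = anc j y -> anc i x = anc i y.
Proof.
  intros H1 H2 E. rewrite <- (anc_anc i j x), <- (anc_anc i j y) by lia. now rewrite E.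
Qed.

(* Number of common ancestor levels of [x] and [y]; their branches separate
   at height [meet_level x y]. *)
Definition meet_level x y : nat := common_cnt X p x y (S (Nat.min (lv x) (lv y))).

Lemma meet_level_count x y :
  meet_level x y = count_upto (fun k => anc k x = anc k y) (S (Nat.min (lv x) (lv y))).
Proof. unfold meet_level. induction (S _); simpl; auto. Qed.

Lemma meet_level_le x y : (meet_level x y <= S (Nat.min (lv x) (lv y)))%nat.
Proof. rewrite meet_level_count. apply count_upto_le. Qed.

Lemma meet_level_diag x : meet_level x x = S (lv x).
Proof. rewrite meet_level_count, Nat.min_id. apply count_upto_all. auto. Qed.

Lemma meet_level_sym x y : meet_level x y = meet_level y x.
Proof.
  rewrite !meet_level_count, Nat.min_comm. apply count_upto_ext. intros; split; auto.
Qed.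

Lemma anc_eq_below_meet x y j : (j < meet_level x y)%nat -> anc j x = anc j y.
Proof.
  rewrite meet_level_count.
  apply (count_upto_lt (fun k => anc k x = anc k y) (S (Nat.min (lv x) (lv y)))); auto.
  intros i k Hik Hk. apply anc_eq_down; lia.
Qed.

Lemma meet_level_le_of_anc_neq x y j : (j <= Nat.min (lv x) (lv y))%nat ->
  anc j x <> anc j y -> (meet_level x y <= j)%nat.
Proof.
  intros Hj Hne. rewrite meet_level_count.
  apply (count_upto_le_fail (fun k => anc k x = anc k y) (S (Nat.min (lv x) (lv y)))); auto.
  intros i k Hik Hk. apply anc_eq_down; lia.
Qed.

Lemma meet_level_anc x y k l : (k <= lv x)%nat -> (l <= lv y)%nat ->
  common_cnt X p (anc k x) (anc l y) (S (Nat.min k l)) = Nat.min (meet_level x y) (S (Nat.min k l)).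
Proof.
  intros Hk Hl. rewrite <- (lvl_anc k x Hk) at 2. rewrite <- (lvl_anc l y Hl) at 2.
  fold (meet_level (anc k x) (anc l y)). rewrite !meet_level_count, !lvl_anc by auto.
  rewrite (count_upto_ext _ (fun j => anc j x = anc j y)).
  - apply (count_upto_min _ (S (Nat.min (lv x) (lv y)))); [|lia|lia].
    intros i j Hij Hj. apply anc_eq_down; lia.
  - intros j Hj. rewrite !anc_anc by lia. tauto.
Qed.

Definition unit_param (r : R) : {t : R | 0 < t <= 1} :=
  match Rlt_le_dec 0 r with
  | left H1 => match Rle_lt_dec r 1 with
               | left H2 => exist _ r (conj H1 H2)
               | right _ => exist _ 1 (conj Rlt_0_1 (Rle_refl 1)) end
  | right _ => exist _ 1 (conj Rlt_0_1 (Rle_refl 1)) end.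

Lemma unit_param_val r : 0 < r <= 1 -> proj1_sig (unit_param r) = r.
Proof.
  intros [H1 H2]. unfold unit_param.
  destruct Rlt_le_dec; [|lra]. destruct Rle_lt_dec; [reflexivity | lra].
Qed.

(* The point at height [h] on the geodesic from the root to the vertex [x]
   (meaningful for [0 <= h <= lvl x + 1]). *)
Definition branch_pt (x : V) (h : R) : pt :=
  match Rle_lt_dec h 0 with
  | left _ => Root X
  | right _ => Pt X (anc (ceil_pred h) x) (unit_param (h - INR (ceil_pred h)))
  end.

Lemma branch_pt_root x h : h <= 0 -> branch_pt x h = Root X.
Proof. intros. unfold branch_pt. destruct Rle_lt_dec; auto. exfalso; lra. Qed.

Lemma height_branch_pt x h : 0 <= h -> h <= INR (lv x) + 1 -> height (branch_pt x h) = h.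
Proof.
  intros H1 H2. unfold branch_pt. destruct Rle_lt_dec. simpl; lra.
  simpl. rewrite lvl_anc by (apply ceil_pred_le; lra). destruct (ceil_pred_spec h r).
  rewrite unit_param_val by lra. lra.
Qed.

Lemma branch_pt_height x t : branch_pt x (height (Pt X x t)) = Pt X x t.
Proof.
  destruct t as [t [Ht1 Ht2]]. cbn [Defs.height proj1_sig]. unfold branch_pt. pose proof (pos_INR (lv x)).
  destruct Rle_lt_dec. { exfalso; lra. }
  rewrite (ceil_pred_unique (lv x)), anc_lvl by lra. f_equal.
  apply eq_sig_hprop. { intros; apply proof_irrelevance. }
  rewrite unit_param_val; simpl; lra.
Qed.

Lemma branch_pt_anc x j h : 0 <= h -> h <= INR j + 1 -> (j <= lv x)%nat ->
  branch_pt (anc j x) h = branch_pt x h.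
Proof.
  intros H1 H2 H3. unfold branch_pt. destruct Rle_lt_dec; auto.
  pose proof (ceil_pred_le j h r H2). rewrite anc_anc by lia. reflexivity.
Qed.

Lemma height_nonneg a : 0 <= height a.
Proof. destruct a as [|x [t Ht]]; simpl. lra. pose proof (pos_INR (lv x)). lra. Qed.

Lemma height_Pt x t : INR (lv x) < height (Pt X x t) <= INR (lv x) + 1.
Proof. destruct t as [t [t1 t2]]. simpl. lra. Qed.

Lemma dist_root_l a : tdist (Root X) a = height a.
Proof. destruct a; reflexivity. Qed.

Lemma dist_root_r a : tdist a (Root X) = height a.
Proof. destruct a; reflexivity. Qed.

(* Distance between the points at heights [u] and [v] on two branches that
   separate at height [m]. *)
Definition branch_dist (m u v : R) := u + v - 2 * Rmin m (Rmin u v).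

Lemma dist_Pt x t y u :
  tdist (Pt X x t) (Pt X y u) =
  branch_dist (INR (meet_level x y)) (height (Pt X x t)) (height (Pt X y u)).
Proof. reflexivity. Qed.

Lemma dist_branch_pt x y h1 h2 : 0 <= h1 -> h1 <= INR (lv x) + 1 ->
  0 <= h2 -> h2 <= INR (lv y) + 1 ->
  tdist (branch_pt x h1) (branch_pt y h2) = branch_dist (INR (meet_level x y)) h1 h2.
Proof.
  intros A1 A2 A3 A4. unfold branch_dist. pose proof (pos_INR (meet_level x y)) as Hm.
  destruct (Rle_lt_dec h1 0) as [e1|e1].
  { rewrite branch_pt_root, dist_root_l, height_branch_pt by lra.
    unfold Rmin; repeat destruct Rle_dec; lra. }
  destruct (Rle_lt_dec h2 0) as [e2|e2].
  { rewrite (branch_pt_root y), dist_root_r, height_branch_pt by lra.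
    unfold Rmin; repeat destruct Rle_dec; lra. }
  pose proof (height_branch_pt x h1 ltac:(lra) A2) as Hx.
  pose proof (height_branch_pt y h2 ltac:(lra) A4) as Hy.
  pose proof (ceil_pred_le _ h1 e1 A2). pose proof (ceil_pred_le _ h2 e2 A4).
  destruct (ceil_pred_spec h1 e1), (ceil_pred_spec h2 e2).
  unfold branch_pt in *. destruct (Rle_lt_dec h1 0); [lra|]. destruct (Rle_lt_dec h2 0); [lra|].
  unfold Defs.dist. rewrite Hx, Hy. unfold meet_height. rewrite !lvl_anc by auto.
  rewrite meet_level_anc by auto. rewrite INR_min, S_INR, INR_min.
  do 2 f_equal.
  set (m := INR (meet_level x y)) in *. set (k1 := INR (ceil_pred h1)) in *.
  set (k2 := INR (ceil_pred h2)) in *.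
  unfold Rmin; repeat destruct Rle_dec; lra.
Qed.

Lemma dist_le_height a b : tdist a b <= height a + height b.
Proof.
  pose proof (height_nonneg a). pose proof (height_nonneg b).
  destruct a as [|x t]; [rewrite dist_root_l; change (height (Root X)) with 0; lra|].
  destruct b as [|y u]; [rewrite dist_root_r; change (height (Root X)) with 0; lra|].
  rewrite dist_Pt. unfold branch_dist. pose proof (pos_INR (meet_level x y)).
  unfold Rmin; repeat destruct Rle_dec; lra.
Qed.

Lemma height_le_dist a b : height b <= height a + tdist a b.
Proof.
  pose proof (height_nonneg a). pose proof (height_nonneg b).
  destruct a as [|x t]; [rewrite dist_root_l; change (height (Root X)) with 0; lra|].
  destruct b as [|y u]; [rewrite dist_root_r; change (height (Root X)) with 0; lra|].
  rewrite dist_Pt. unfold branch_dist. pose proof (pos_INR (meet_level x y)).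
  unfold Rmin; repeat destruct Rle_dec; lra.
Qed.

Lemma dist_sym a b : tdist a b = tdist b a.
Proof.
  destruct a as [|x t]; destruct b as [|y u]; auto.
  rewrite !dist_Pt, meet_level_sym. unfold branch_dist. rewrite (Rmin_comm (height (Pt X x t))). ring.
Qed.

Lemma dist_diag a : tdist a a = 0.
Proof.
  destruct a as [|x t]. reflexivity. rewrite dist_Pt, meet_level_diag, S_INR.
  pose proof (height_Pt x t). unfold branch_dist, Rmin; repeat destruct Rle_dec; lra.
Qed.

Lemma bounded_height_lt (r : R) : Defs.bounded X p (fun z => height z < r).
Proof. exists (2 * r). intros y z Hy Hz. pose proof (dist_le_height y z). lra. Qed.

Lemma height_ray (F : R -> pt) : F 0 = Root X ->
  (forall s t, 0 <= s -> 0 <= t -> tdist (F s) (F t) = Rabs (s - t)) ->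
  forall t, 0 <= t -> height (F t) = t.
Proof.
  intros F0 Fi t Ht. rewrite <- dist_root_l, <- F0, Fi by lra. rewrite Rabs_left1; lra.
Qed.

Definition cone (n0 : nat) (w : V) (a : pt) : Prop :=
  match a with
  | Root _ => False
  | Pt _ x _ => (n0 <= lv x)%nat /\ anc n0 x = w
  end.

(* Two cones over distinct vertices of level [n0] meet only at height [n0],
   so their points at height [>= n0 + 2] are [4] apart. *)
Lemma cone_separated n0 w a b : cone n0 w a -> ~ cone n0 w b ->
  INR n0 + 2 <= height a -> INR n0 + 2 <= height b -> 4 <= tdist a b.
Proof.
  intros Ca Cb Ha Hb. destruct a as [|x t]; [destruct Ca|]. destruct b as [|y u].
  { change (height (Root X)) with 0 in Hb. pose proof (pos_INR n0). lra. }
  destruct Ca as [Ca1 Ca2]. pose proof (height_Pt x t). pose proof (height_Pt y u).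
  assert (Hy : (n0 < lv y)%nat) by (apply INR_lt; lra).
  assert (Hm : (meet_level x y <= n0)%nat).
  { apply meet_level_le_of_anc_neq. lia. intro E. apply Cb. simpl. split; [lia | congruence]. }
  apply le_INR in Hm. rewrite dist_Pt. unfold branch_dist, Rmin; repeat destruct Rle_dec; lra.
Qed.

Lemma cone_height_le n0 w n b :
  (forall z : V, (n0 <= lv z)%nat -> anc n0 z = w -> (lv z < n)%nat) ->
  cone n0 w b -> height b <= INR n.
Proof.
  intros Hdead Cb. destruct b as [|y u]; [destruct Cb|]. destruct Cb as [C1 C2].
  specialize (Hdead y C1 C2). pose proof (height_Pt y u).
  assert (E : INR (S (lv y)) <= INR n) by (apply le_INR; lia). rewrite S_INR in E. lra.
Qed.

Lemma cone_path n0 w (c : R -> pt) a b : a <= b ->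
  (forall t, a <= t <= b -> exists d, 0 < d /\
     forall r, a <= r <= b -> Rabs (t - r) < d -> tdist (c t) (c r) < 1) ->
  (forall t, a <= t <= b -> INR n0 + 2 <= height (c t)) ->
  cone n0 w (c a) -> cone n0 w (c b).
Proof.
  intros Hab Hc Hh. apply (interval_locally_constant (fun t => cone n0 w (c t))); auto.
  intros t Ht. destruct (Hc t Ht) as [d [Hd Hl]]. exists d. split; auto.
  intros r Hr Htr. pose proof (Hl r Hr Htr) as Hclose. pose proof Hclose as Hclose'.
  rewrite dist_sym in Hclose'.
  pose proof (Hh t Ht). pose proof (Hh r Hr).
  split; intros C; apply NNPP; intro C'.
  all: pose proof (cone_separated _ _ _ _ C C' ltac:(auto) ltac:(auto)); lra.
Qed.

Lemma proper_height_bound (A : pt -> Prop) f : A (Root X) -> f (Root X) = Root X ->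
  metr_proper_on X p A f ->
  forall r, 0 < r -> exists M, forall y, A y -> height (f y) < r -> height y <= M.
Proof.
  intros AR fR fP r Hr. destruct (fP _ (bounded_height_lt r)) as [M HM]. exists M.
  intros y Ay Hy. rewrite <- dist_root_r. apply HM; auto. split; auto.
  rewrite fR. change (height (Root X)) with 0. auto.
Qed.

Lemma not_ML_dying_cone : ~ MittagLeffler X p -> exists n0 : nat, forall K : nat,
  exists n1 n w, (K <= n1)%nat /\ (n0 < n1)%nat /\
    (exists x : X n1, anc n0 (existT X n1 x) = w) /\
    (forall z : V, (n0 <= lv z)%nat -> anc n0 z = w -> (lv z < n)%nat).
Proof.
  intros notML. apply not_all_ex_not in notML as [n0 notML]. exists n0. intros K.
  set (n1 := S (Nat.max n0 K)).
  assert (Hex : exists n, (n1 < n)%nat /\ exists w : V,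
     ~ ((exists x : X n, anc n0 (existT X n x) = w) <->
        (exists x : X n1, anc n0 (existT X n1 x) = w))).
  { apply NNPP; intro C. apply notML. exists n1. split. lia.
    intros n Hn w. apply NNPP. intro C2. apply C. eauto. }
  destruct Hex as [n [Hn [w Hw]]].
  assert (Hnone : ~ exists x : X n, anc n0 (existT X n x) = w).
  { intros [x Ex]. apply Hw. split; intros _; [|eauto].
    destruct (vtx_of_lvl (anc n1 (existT X n x)) n1) as [x' Ex']. apply lvl_anc. simpl; lia.
    exists x'. rewrite <- Ex', <- Ex. apply anc_anc. lia. simpl; lia. }
  exists n1, n, w. repeat split; try lia.
  - apply NNPP; intro C. apply Hw. split; intro E; exfalso; auto.
  - intros z Hz Ez. apply Nat.nlt_ge. intro Hge. apply Hnone.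
    destruct (vtx_of_lvl (anc n z) n) as [x Ex]. apply lvl_anc; lia.
    exists x. rewrite <- Ex, anc_anc; auto; lia.
Qed.

Lemma ray_Tinf (F : R -> pt) : F 0 = Root X ->
  (forall s t, 0 <= s -> 0 <= t -> tdist (F s) (F t) = Rabs (s - t)) ->
  forall t, 0 <= t -> Tinf X p (F t).
Proof. intros F0 Fi t Ht. right. exists F. repeat split; auto. exists t. auto. Qed.

Lemma homotopy_keeps_cone (H : pt -> R -> pt) f g n0 w a :
  rooted_mp_homotopy X p (Tall X) (Tall X) H f g ->
  (forall s, 0 <= s <= 1 -> INR n0 + 2 <= height (H a s)) ->
  cone n0 w (g a) -> cone n0 w (f a).
Proof.
  intros [_ [H0 [H1 [_ [HC _]]]]] Hhigh Cga.
  rewrite <- (H0 a I). replace 0 with (1 - 1) by ring.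
  apply (cone_path n0 w (fun s => H a (1 - s)) 0 1); [lra| | |].
  - intros t Ht. destruct (HC a (1 - t) I ltac:(lra) 1 Rlt_0_1) as [d [Hd Hl]].
    exists d. split; auto. intros r Hr Htr. apply Hl; [exact I | lra | |].
    + rewrite dist_diag. auto.
    + replace (1 - t - (1 - r)) with (- (t - r)) by ring. rewrite Rabs_Ropp. auto.
  - intros t Ht. apply Hhigh. lra.
  - rewrite Rminus_0_r, H1 by exact I. auto.
Qed.

(* A proper map cannot keep a whole ray inside a cone of bounded height, so
   along the ray it must come back near the root. *)
Lemma ray_image_returns (g : pt -> pt) (F : R -> pt) n0 n w M s0 :
  cont_on X p (Tinf X p) g -> F 0 = Root X ->
  (forall s t, 0 <= s -> 0 <= t -> tdist (F s) (F t) = Rabs (s - t)) ->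
  (forall z : V, (n0 <= lv z)%nat -> anc n0 z = w -> (lv z < n)%nat) ->
  (forall y, Tinf X p y -> height (g y) < INR n + 1 -> height y <= M) ->
  0 <= s0 -> cone n0 w (g (F s0)) ->
  exists t, s0 <= t /\ height (g (F t)) < INR n0 + 2.
Proof.
  intros gC F0 Fi Hdead HM Hs0 Cs0. pose proof (height_ray F F0 Fi) as Fh.
  set (T := Rmax s0 M + 1). pose proof (Rmax_l s0 M). pose proof (Rmax_r s0 M).
  apply NNPP; intro Hnot.
  assert (CT : cone n0 w (g (F T))).
  { apply (cone_path n0 w (fun t => g (F t)) s0 T); [unfold T; lra| | |].
    - intros t Ht. destruct (gC (F t) (ray_Tinf F F0 Fi t ltac:(lra)) 1 Rlt_0_1) as [d [Hd Hl]].
      exists d. split; auto. intros r Hr Htr. apply Hl. apply ray_Tinf; auto; lra.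
      rewrite Fi by lra. auto.
    - intros t Ht. apply Rnot_lt_le. intro. apply Hnot. exists t. split; [lra | auto].
    - auto. }
  pose proof (cone_height_le n0 w n _ Hdead CT).
  assert (height (F T) <= M) by (apply HM; [apply ray_Tinf | ]; auto; unfold T in *; lra).
  rewrite Fh in * by (unfold T; lra). unfold T in *. lra.
Qed.

Lemma homotopy_equivalence_ML : rooted_mp_homotopy_equivalence X p -> MittagLeffler X p.
Proof.
  intros [f [g [[fT [fR [_ fP]]] [[_ [gR [gC gP]]] [[H HH] _]]]]].
  apply NNPP; intro notML. destruct (not_ML_dying_cone notML) as [n0 Hdie].
  pose proof (pos_INR n0).
  assert (TinfR : Tinf X p (Root X)) by (left; auto).
  pose proof HH as [_ [_ [_ [_ [_ HP]]]]].
  destruct (HP (INR n0 + 2)) as [N [_ HN]]; [lra|].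
  destruct (proper_height_bound _ g TinfR gR gP (INR n0 + 2)) as [Mg HMg]; [lra|].
  destruct (proper_height_bound _ f I fR fP (Mg + 1)) as [Mf HMf].
  { enough (0 <= Mg) by lra. change 0 with (height (Root X)). apply HMg; auto.
    rewrite gR. change (height (Root X)) with 0. lra. }
  destruct (nat_above (Rmax N Mf)) as [K HK].
  pose proof (Rmax_l N Mf). pose proof (Rmax_r N Mf).
  destruct (Hdie K) as [n1 [n [w [HK1 [Hn01 [[x1 Ex1] Hdead]]]]]].
  set (a := Pt X (existT X n1 x1) (unit_param 1)).
  assert (Ha : height a = INR n1 + 1).
  { unfold a. cbn [Defs.height]. rewrite unit_param_val by lra. reflexivity. }
  assert (HKn1 : INR K <= INR n1) by (apply le_INR; auto).
  assert (Cgfa : cone n0 w (g (f a))).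
  { apply (homotopy_keeps_cone H (fun x => g (f x)) (fun x => x)); [exact HH | |].
    - intros s Hs. apply Rnot_lt_le. intro Hlt. rewrite <- dist_root_l in Hlt.
      specialize (HN a s I Hs Hlt). rewrite dist_root_l in HN. lra.
    - simpl. split; [lia | exact Ex1]. }
  destruct (fT a I) as [Efa | [F [F0 [Fi [s0 [Hs0 Fs0]]]]]].
  { rewrite Efa, gR in Cgfa. destruct Cgfa. }
  destruct (proper_height_bound _ g TinfR gR gP (INR n + 1)) as [Mg' HMg'].
  { pose proof (pos_INR n); lra. }
  rewrite <- Fs0 in Cgfa.
  destruct (ray_image_returns g F n0 n w Mg' s0 gC F0 Fi Hdead HMg' Hs0 Cgfa) as [t [Ht Hgt]].
  pose proof (height_ray F F0 Fi) as Fh.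
  assert (height (F t) <= Mg) by (apply HMg; auto; apply ray_Tinf; auto; lra).
  rewrite Fh in * by lra.
  assert (height a <= Mf) by (apply HMf; [exact I | rewrite <- Fs0, Fh; lra]).
  lra.
Qed.

Definition alive (v : V) : Prop :=
  forall n, (lv v <= n)%nat -> exists y : V, lv y = n /\ anc (lv v) y = v.

Lemma alive_anc v k : alive v -> (k <= lv v)%nat -> alive (anc k v).
Proof.
  intros A Hk n Hn. rewrite lvl_anc in * by auto.
  destruct (A (Nat.max n (lv v)) ltac:(lia)) as [y [Ly Ay]].
  exists (anc n y). split. apply lvl_anc; lia.
  rewrite anc_anc by lia. rewrite <- Ay, anc_anc by lia. auto.
Qed.

Lemma coherent_branch_Tinf (r : nat -> V) :
  (forall k, lv (r k) = k) -> (forall j m, (j <= m)%nat -> anc j (r m) = r j) ->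
  forall k h, 0 <= h -> h <= INR k + 1 -> Tinf X p (branch_pt (r k) h).
Proof.
  intros rl ra.
  set (F := fun t => branch_pt (r (ceil_pred t)) t).
  assert (FP : forall m t, 0 <= t -> t <= INR m + 1 -> F t = branch_pt (r m) t).
  { intros m t Ht Hm. unfold F. destruct (Rle_lt_dec t 0). rewrite !branch_pt_root; auto.
    pose proof (ceil_pred_le m t r0 Hm). destruct (ceil_pred_spec t r0).
    rewrite <- (ra (ceil_pred t) m) by auto. apply branch_pt_anc; auto; try lra.
    rewrite rl; auto. }
  assert (Fceil : forall t, 0 <= t -> t <= INR (ceil_pred (Rmax t 1)) + 1).
  { intros t Ht. destruct (ceil_pred_spec (Rmax t 1)). pose proof (Rmax_r t 1); lra.
    pose proof (Rmax_l t 1). lra. }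
  intros k h Hh Hk. right. exists F. split. { unfold F. apply branch_pt_root. lra. } split.
  - intros s t Hs Ht. set (m := Nat.max (ceil_pred (Rmax s 1)) (ceil_pred (Rmax t 1))).
    assert (Ls : s <= INR m + 1).
    { pose proof (Fceil s Hs). assert (INR (ceil_pred (Rmax s 1)) <= INR m) by (apply le_INR; lia). lra. }
    assert (Lt : t <= INR m + 1).
    { pose proof (Fceil t Ht). assert (INR (ceil_pred (Rmax t 1)) <= INR m) by (apply le_INR; lia). lra. }
    rewrite (FP m s), (FP m t), dist_branch_pt by (rewrite ?rl; lra).
    rewrite meet_level_diag, rl, S_INR. unfold branch_dist.
    unfold Rmin, Rabs; repeat destruct Rle_dec; repeat destruct Rcase_abs; lra.
  - exists h. split; auto.
Qed.

Section MittagLeffler.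
Hypothesis HML : MittagLeffler X p.

Lemma ML_anc_alive j : exists B, forall y, (j <= lv y)%nat -> (B < lv y)%nat -> alive (anc j y).
Proof.
  destruct (HML j) as [n1 [Hj Hi]]. exists n1. intros y Hy Hb n Hn.
  rewrite lvl_anc in * by auto.
  destruct (Nat.le_gt_cases n (lv y)).
  - exists (anc n y). split. apply lvl_anc; auto. apply anc_anc; lia.
  - destruct (Hi n ltac:(lia) (anc j y)) as [_ Hr].
    destruct Hr as [x Ex].
    + destruct (vtx_of_lvl (anc n1 y) n1) as [x Ex]. apply lvl_anc; lia.
      exists x. rewrite <- Ex. apply anc_anc; lia.
    + exists (existT X n x). split; auto.
Qed.

Lemma alive_child v : alive v -> exists c, lv c = S (lv v) /\ anc (lv v) c = v /\ alive c.
Proof.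
  intros A. destruct (ML_anc_alive (S (lv v))) as [B HB].
  destruct (A (Nat.max (S B) (S (lv v))) ltac:(lia)) as [y [Ly Ay]].
  exists (anc (S (lv v)) y). split. apply lvl_anc; lia. split.
  rewrite anc_anc by lia. auto. apply HB; lia.
Qed.

Lemma alive_coherent_branch v0 : alive v0 -> exists r : nat -> V,
  (forall k, lv (r k) = k) /\ (forall j m, (j <= m)%nat -> anc j (r m) = r j) /\ r (lv v0) = v0.
Proof.
  intros A.
  assert (next : forall v : {v : V | alive v}, {c : {c : V | alive c} |
      lv (proj1_sig c) = S (lv (proj1_sig v)) /\
      anc (lv (proj1_sig v)) (proj1_sig c) = proj1_sig v}).
  { intros [v Av]. apply constructive_indefinite_description.
    destruct (alive_child v Av) as [c [C1 [C2 C3]]]. exists (exist _ c C3). auto. }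
  set (ch := fun k => proj1_sig (Nat.iter k (fun v => proj1_sig (next v)) (exist _ v0 A))).
  assert (chS : forall k, lv (ch (S k)) = S (lv (ch k)) /\ anc (lv (ch k)) (ch (S k)) = ch k).
  { intros k. unfold ch. simpl. destruct (next _) as [c Hc]. auto. }
  assert (chl : forall k, lv (ch k) = (lv v0 + k)%nat).
  { induction k. change (ch 0%nat) with v0. lia. rewrite (proj1 (chS k)). lia. }
  assert (cha : forall m k, (k <= m)%nat -> anc (lv v0 + k) (ch m) = ch k).
  { induction m; intros k Hk.
    - replace k with 0%nat by lia. rewrite <- (chl 0%nat). apply anc_lvl.
    - destruct (Nat.eq_dec k (S m)). { subst k. rewrite <- chl. apply anc_lvl. }
      rewrite <- (anc_anc (lv v0 + k) (lv v0 + m)) by (rewrite ?chl; lia).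
      rewrite <- (chl m), (proj2 (chS m)). apply IHm. lia. }
  exists (fun k => anc k (ch k)). split; [|split].
  - intros k. apply lvl_anc. rewrite chl. lia.
  - intros j m Hj. rewrite anc_anc by (rewrite ?chl; lia).
    rewrite <- (cha m j) by auto. rewrite anc_anc by (rewrite ?chl; lia). auto.
  - transitivity (ch 0%nat); [|reflexivity].
    rewrite <- (cha (lv v0) 0%nat) by lia. rewrite Nat.add_0_r. reflexivity.
Qed.

Lemma alive_branch_pt_Tinf v h : alive v -> 0 <= h -> h <= INR (lv v) + 1 ->
  Tinf X p (branch_pt v h).
Proof.
  intros A H1 H2. destruct (alive_coherent_branch v A) as [r [rl [ra rv]]].
  rewrite <- rv. apply (coherent_branch_Tinf r); auto.
Qed.

Lemma dead_anc_bounded Mn : exists Bm, forall j y, (j <= Mn)%nat -> (j <= lv y)%nat ->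
  ~ alive (anc j y) -> (lv y <= Bm)%nat.
Proof.
  induction Mn as [|Mn [B1 HB1]].
  - destruct (ML_anc_alive 0) as [B HB]. exists B. intros j y Hj Hy NA.
    replace j with 0%nat in * by lia. apply Nat.nlt_ge. intro. apply NA, HB; lia.
  - destruct (ML_anc_alive (S Mn)) as [B HB]. exists (Nat.max B B1).
    intros j y Hj Hy NA. destruct (Nat.eq_dec j (S Mn)).
    + subst j. apply Nat.nlt_ge. intro. apply NA, HB; lia.
    + specialize (HB1 j y ltac:(lia) Hy NA). lia.
Qed.
End MittagLeffler.

Lemma Tinf_alive x t : Tinf X p (Pt X x t) -> alive x.
Proof.
  intros [E | [F [F0 [Fi [s [Hs Fs]]]]]]. discriminate.
  pose proof (height_ray F F0 Fi) as Fh. intros n Hn.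
  assert (Hsh : s = height (Pt X x t)) by (rewrite <- Fs, Fh; auto).
  pose proof (height_Pt x t).
  assert (Ln : INR (lv x) <= INR n) by (apply le_INR; auto).
  pose proof (pos_INR n). pose proof (Fh (INR n + 1) ltac:(lra)) as Hb.
  destruct (F (INR n + 1)) as [|y u] eqn:Eb.
  { change (height (Root X)) with 0 in Hb. lra. }
  pose proof (height_Pt y u).
  assert (Ly : lv y = n).
  { assert (lv y < S n)%nat by (apply INR_lt; rewrite S_INR; lra).
    assert (n < S (lv y))%nat by (apply INR_lt; rewrite S_INR; lra). lia. }
  exists y. split; auto.
  pose proof (Fi s (INR n + 1) Hs ltac:(lra)) as Hd. rewrite Fs, Eb, dist_Pt in Hd.
  rewrite Rabs_left1 in Hd by lra.
  assert (Hm : INR (lv x) < INR (meet_level x y)).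
  { pose proof (pos_INR (meet_level x y)). revert Hd. unfold branch_dist, Rmin.
    repeat destruct Rle_dec; intros; lra. }
  apply INR_lt, anc_eq_below_meet in Hm. rewrite anc_lvl in Hm. auto.
Qed.

(* Number of alive ancestors of [x] (counting [x] itself): the branch to [x]
   lies in [T_oo] up to height [alive_depth x]. *)
Definition alive_depth (x : V) : nat := count_upto (fun j => alive (anc j x)) (S (lv x)).

Lemma alive_anc_down x : forall i j, (i <= j)%nat -> (j < S (lv x))%nat ->
  alive (anc j x) -> alive (anc i x).
Proof.
  intros i j Hij Hj A. rewrite <- (anc_anc i j x) by lia. apply alive_anc; auto.
  rewrite lvl_anc; lia.
Qed.

Lemma alive_depth_alive x : alive x -> alive_depth x = S (lv x).
Proof. intros A. apply count_upto_all. intros j Hj. apply alive_anc; auto. lia. Qed.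

Lemma alive_depth_dead x : ~ alive x -> (alive_depth x <= lv x)%nat.
Proof.
  intros NA. apply (count_upto_le_fail (fun j => alive (anc j x)) (S (lv x))); [apply alive_anc_down | auto |].
  rewrite anc_lvl. auto.
Qed.

Lemma alive_below_depth x j : (j < alive_depth x)%nat -> alive (anc j x).
Proof. apply (count_upto_lt (fun j => alive (anc j x)) (S (lv x))); [apply alive_anc_down | auto]. Qed.

Lemma dead_at_depth x : (alive_depth x < S (lv x))%nat -> ~ alive (anc (alive_depth x) x).
Proof. apply (count_upto_fail (fun j => alive (anc j x)) (S (lv x))); [apply alive_anc_down | auto]. Qed.

(* Below their meet two branches have the same ancestors, hence the same
   alive ones. *)
Lemma alive_depth_meet x y :
  (alive_depth x = alive_depth y /\ (alive_depth x <= lv x)%nat /\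
   (alive_depth x <= lv y)%nat /\ (alive_depth x <= meet_level x y)%nat) \/
  ((meet_level x y <= alive_depth x)%nat /\ (meet_level x y <= alive_depth y)%nat).
Proof.
  assert (E : Nat.min (alive_depth x) (meet_level x y) = Nat.min (alive_depth y) (meet_level x y)).
  { pose proof (meet_level_le x y). unfold alive_depth.
    rewrite <- (count_upto_min _ (S (lv x)) (alive_anc_down x) (S (lv x)) (meet_level x y)) by lia.
    rewrite <- (count_upto_min _ (S (lv y)) (alive_anc_down y) (S (lv y)) (meet_level x y)) by lia.
    apply count_upto_ext. intros j Hj. rewrite (anc_eq_below_meet x y j Hj). tauto. }
  pose proof (meet_level_le x y). pose proof (count_upto_le (fun j => alive (anc j x)) (S (lv x))).
  fold (alive_depth x) in *. lia.
Qed.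

(* Heights are shrunk linearly in time towards [alive_depth], which is where
   the branch leaves [T_oo]. *)
Definition retract_height (x : V) (h s : R) :=
  Rmin h (INR (alive_depth x)) + (1 - s) * (h - Rmin h (INR (alive_depth x))).

Definition retract_homotopy (a : pt) (s : R) : pt :=
  match a with
  | Root _ => Root X
  | Pt _ x t => branch_pt x (retract_height x (height (Pt X x t)) s)
  end.

Lemma retract_homotopy_Root s : retract_homotopy (Root X) s = Root X.
Proof. reflexivity. Qed.

Lemma retract_homotopy_Pt x t s :
  retract_homotopy (Pt X x t) s = branch_pt x (retract_height x (height (Pt X x t)) s).
Proof. reflexivity. Qed.

Lemma retract_height_bounds x h s : 0 <= h -> 0 <= s <= 1 ->
  0 <= retract_height x h s <= h /\ Rmin h (INR (alive_depth x)) <= retract_height x h s.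
Proof.
  intros Hh Hs. unfold retract_height. pose proof (pos_INR (alive_depth x)).
  assert (0 <= Rmin h (INR (alive_depth x)) <= h) by (unfold Rmin; destruct Rle_dec; lra).
  set (c := Rmin h (INR (alive_depth x))) in *. assert (0 <= (1 - s) * (h - c) <= h - c) by nra. lra.
Qed.

Lemma height_retract_homotopy x t s : 0 <= s <= 1 ->
  height (retract_homotopy (Pt X x t) s) = retract_height x (height (Pt X x t)) s.
Proof.
  intros Hs. pose proof (height_Pt x t). pose proof (pos_INR (lv x)).
  pose proof (retract_height_bounds x (height (Pt X x t)) s ltac:(lra) Hs).
  apply height_branch_pt; lra.
Qed.

Lemma retract_homotopy_0 a : retract_homotopy a 0 = a.
Proof.
  destruct a as [|x t]; [reflexivity|]. rewrite retract_homotopy_Pt. unfold retract_height.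
  rewrite Rminus_0_r, Rmult_1_l, Rplus_minus. apply branch_pt_height.
Qed.

Lemma retract_homotopy_alive x t s : alive x -> retract_homotopy (Pt X x t) s = Pt X x t.
Proof.
  intros A. rewrite retract_homotopy_Pt. unfold retract_height. rewrite alive_depth_alive by auto.
  pose proof (height_Pt x t). rewrite Rmin_left by (rewrite S_INR; lra).
  rewrite Rminus_diag, Rmult_0_r, Rplus_0_r. apply branch_pt_height.
Qed.

Lemma branch_dist_lipschitz m u v v' : Rabs (branch_dist m u v - branch_dist m u v') <= Rabs (v - v').
Proof. unfold branch_dist, Rmin. repeat destruct Rle_dec; unfold Rabs; repeat destruct Rcase_abs; lra. Qed.

Lemma retract_height_lipschitz x h s r : 0 <= h ->
  Rabs (retract_height x h s - retract_height x h r) <= Rabs (s - r) * h.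
Proof.
  intros Hh. unfold retract_height. pose proof (pos_INR (alive_depth x)).
  set (c := Rmin h (INR (alive_depth x))).
  assert (Hc : 0 <= c <= h) by (unfold c, Rmin; destruct Rle_dec; lra).
  replace (c + (1 - s) * (h - c) - (c + (1 - r) * (h - c))) with (- (s - r) * (h - c)) by ring.
  rewrite Rabs_mult, Rabs_Ropp, (Rabs_right (h - c)) by lra.
  apply Rmult_le_compat_l; [apply Rabs_pos | lra].
Qed.

Lemma branch_dist_shrink m t h1 h2 b1 b2 : 0 <= m -> 0 <= t <= 1 -> 0 <= h1 -> 0 <= h2 ->
  0 <= b1 -> 0 <= b2 ->
  ((b1 = b2 /\ b1 <= h1 /\ b1 <= h2 /\ b1 <= m) \/ (m <= b1 /\ m <= b2)) ->
  branch_dist m (Rmin h1 b1 + t * (h1 - Rmin h1 b1)) (Rmin h2 b2 + t * (h2 - Rmin h2 b2))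
  <= branch_dist m h1 h2.
Proof.
  intros Hm Ht H1 H2 B1 B2 [[E [C1 [C2 C3]]]|[C1 C2]].
  - subst b2. rewrite !Rmin_right by lra.
    assert (0 <= t * (h1 - b1) <= h1 - b1) by nra.
    assert (0 <= t * (h2 - b1) <= h2 - b1) by nra.
    unfold branch_dist, Rmin at 1 2 3 4; repeat destruct Rle_dec; nra.
  - assert (E1 : Rmin h1 b1 = h1 \/ (Rmin h1 b1 = b1 /\ b1 <= h1))
      by (unfold Rmin; destruct Rle_dec; [left|right]; lra).
    assert (E2 : Rmin h2 b2 = h2 \/ (Rmin h2 b2 = b2 /\ b2 <= h2))
      by (unfold Rmin; destruct Rle_dec; [left|right]; lra).
    set (c1 := Rmin h1 b1) in *. set (c2 := Rmin h2 b2) in *.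
    assert (0 <= t * (h1 - c1) <= h1 - c1) by (destruct E1; nra).
    assert (0 <= t * (h2 - c2) <= h2 - c2) by (destruct E2; nra).
    set (u1 := t * (h1 - c1)) in *. set (u2 := t * (h2 - c2)) in *.
    unfold branch_dist, Rmin at 1 2 3 4; repeat destruct Rle_dec; lra.
Qed.

Lemma retract_homotopy_dist_same_time x t y u s : 0 <= s <= 1 ->
  tdist (retract_homotopy (Pt X x t) s) (retract_homotopy (Pt X y u) s)
  <= tdist (Pt X x t) (Pt X y u).
Proof.
  intros Hs. rewrite !retract_homotopy_Pt, dist_Pt.
  pose proof (height_Pt x t). pose proof (height_Pt y u).
  pose proof (pos_INR (lv x)). pose proof (pos_INR (lv y)).
  set (h1 := height (Pt X x t)) in *. set (h2 := height (Pt X y u)) in *.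
  pose proof (retract_height_bounds x h1 s ltac:(lra) Hs).
  pose proof (retract_height_bounds y h2 s ltac:(lra) Hs).
  rewrite dist_branch_pt by lra.
  unfold retract_height. apply branch_dist_shrink; try lra; try apply pos_INR.
  destruct (alive_depth_meet x y) as [[E [Lx [Ly Lm]]] | [Lx Ly]].
  - left. rewrite E in *. apply le_INR in Lx, Ly, Lm. repeat split; auto; lra.
  - right. split; apply le_INR; auto.
Qed.

Lemma retract_homotopy_dist a b s r : 0 <= s <= 1 -> 0 <= r <= 1 ->
  tdist (retract_homotopy a s) (retract_homotopy b r) <= tdist a b + Rabs (s - r) * height b.
Proof.
  intros Hs Hr. pose proof (Rabs_pos (s - r)). pose proof (height_nonneg b).
  assert (0 <= Rabs (s - r) * height b) by (apply Rmult_le_pos; auto).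
  destruct a as [|x t]; destruct b as [|y u]; rewrite ?retract_homotopy_Root.
  - rewrite dist_diag. lra.
  - rewrite !dist_root_l, height_retract_homotopy by auto.
    pose proof (retract_height_bounds y (height (Pt X y u)) r ltac:(lra) Hr). lra.
  - rewrite !dist_root_r, height_retract_homotopy by auto.
    pose proof (height_nonneg (Pt X x t)).
    pose proof (retract_height_bounds x (height (Pt X x t)) s ltac:(lra) Hs). lra.
  - pose proof (retract_homotopy_dist_same_time x t y u s Hs) as Hsame.
    rewrite !retract_homotopy_Pt in *.
    pose proof (height_Pt x t). pose proof (height_Pt y u).
    pose proof (pos_INR (lv x)). pose proof (pos_INR (lv y)).
    set (h1 := height (Pt X x t)) in *. set (h2 := height (Pt X y u)) in *.
    pose proof (retract_height_bounds x h1 s ltac:(lra) Hs).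
    pose proof (retract_height_bounds y h2 s ltac:(lra) Hs).
    pose proof (retract_height_bounds y h2 r ltac:(lra) Hr).
    rewrite !dist_branch_pt in * by lra.
    set (m := INR (meet_level x y)) in *.
    pose proof (branch_dist_lipschitz m (retract_height x h1 s)
      (retract_height y h2 r) (retract_height y h2 s)) as Hlip.
    rewrite (Rabs_minus_sym (retract_height y h2 r)) in Hlip.
    pose proof (retract_height_lipschitz y h2 s r ltac:(lra)).
    pose proof (Rle_abs (branch_dist m (retract_height x h1 s) (retract_height y h2 r)
      - branch_dist m (retract_height x h1 s) (retract_height y h2 s))).
    lra.
Qed.

Lemma retract_homotopy_continuous x s : 0 <= s <= 1 -> forall eps, 0 < eps ->
  exists delta, 0 < delta /\ forall y r, 0 <= r <= 1 -> tdist x y < delta ->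
    Rabs (s - r) < delta -> tdist (retract_homotopy x s) (retract_homotopy y r) < eps.
Proof.
  intros Hs eps Heps. pose proof (height_nonneg x).
  set (A := height x + 2).
  set (d := Rmin 1 (eps / (2 * A))).
  assert (Hd1 : d <= 1) by apply Rmin_l. assert (Hd2 : d <= eps / (2 * A)) by apply Rmin_r.
  assert (Hd0 : 0 < d).
  { unfold d, Rmin. destruct Rle_dec. lra. apply Rdiv_lt_0_compat; unfold A; lra. }
  assert (HdA : d * A <= eps / 2).
  { apply Rle_trans with (eps / (2 * A) * A).
    - apply Rmult_le_compat_r; [unfold A; lra | auto].
    - right. field. unfold A; lra. }
  exists d. split; auto. intros y r Hr Dxy Dsr.
  pose proof (retract_homotopy_dist x y s r Hs Hr). pose proof (height_le_dist x y).
  assert (Rabs (s - r) * height y <= d * (height x + 1)).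
  { apply Rmult_le_compat; [apply Rabs_pos | apply height_nonneg | lra | lra]. }
  unfold A in HdA. lra.
Qed.

Lemma retract_homotopy_Tinf_fixed a s : Tinf X p a -> retract_homotopy a s = a.
Proof.
  destruct a as [|x t]; [reflexivity|]. intros Ta. apply retract_homotopy_alive.
  eapply Tinf_alive; eauto.
Qed.

Section MittagLefflerRetraction.
Hypothesis HML : MittagLeffler X p.

Lemma retract_homotopy_1_Tinf a : Tinf X p (retract_homotopy a 1).
Proof.
  destruct a as [|x t]; [left; reflexivity|].
  rewrite retract_homotopy_Pt. unfold retract_height. rewrite Rminus_diag, Rmult_0_l, Rplus_0_r.
  pose proof (height_Pt x t). pose proof (pos_INR (alive_depth x)).
  set (h := Rmin (height (Pt X x t)) (INR (alive_depth x))).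
  assert (Hh1 : h <= height (Pt X x t)) by apply Rmin_l.
  assert (Hh2 : h <= INR (alive_depth x)) by apply Rmin_r.
  destruct (Rle_lt_dec h 0). { left. apply branch_pt_root. auto. }
  destruct (ceil_pred_spec h r).
  pose proof (ceil_pred_le (lv x) h r ltac:(lra)).
  assert (Hk : (ceil_pred h < alive_depth x)%nat) by (apply INR_lt; lra).
  rewrite <- (branch_pt_anc x (ceil_pred h)) by (auto; lra).
  apply alive_branch_pt_Tinf; auto; [apply alive_below_depth; auto | lra |].
  rewrite lvl_anc by auto. lra.
Qed.

Lemma retract_homotopy_proper M : 0 < M -> exists N, 0 < N /\
  forall a s, 0 <= s <= 1 -> tdist (Root X) (retract_homotopy a s) < M -> tdist (Root X) a < N.
Proof.
  intros HM. destruct (nat_above M) as [Mn HMn]. destruct (dead_anc_bounded HML Mn) as [Bm HBm].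
  exists (Rmax M (INR Bm + 2)). pose proof (Rmax_l M (INR Bm + 2)). pose proof (Rmax_r M (INR Bm + 2)).
  split; [lra|]. intros a s Hs Ha. rewrite !dist_root_l in *.
  destruct a as [|x t]. { change (height (Root X)) with 0. lra. }
  destruct (classic (alive x)) as [A|NA]. { rewrite retract_homotopy_alive in Ha by auto. lra. }
  pose proof (alive_depth_dead x NA). pose proof (height_Pt x t). pose proof (pos_INR (lv x)).
  assert (INR (alive_depth x) <= INR (lv x)) by (apply le_INR; auto).
  rewrite height_retract_homotopy in Ha by auto.
  pose proof (retract_height_bounds x (height (Pt X x t)) s ltac:(lra) Hs) as [_ Hlow].
  rewrite Rmin_right in Hlow by lra.
  assert (Hb : (alive_depth x < Mn)%nat) by (apply INR_lt; lra).
  pose proof (dead_at_depth x ltac:(lia)) as Hdead.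
  specialize (HBm (alive_depth x) x ltac:(lia) ltac:(lia) Hdead).
  apply le_INR in HBm. lra.
Qed.

Lemma ML_deformation_retraction : deformation_retraction X p.
Proof.
  exists retract_homotopy. split; [|split].
  - split; [intros; exact I|]. split; [intros; apply retract_homotopy_0|].
    split; [intros; reflexivity|]. split; [intros; reflexivity|]. split.
    + intros x s _ Hs eps Heps. destruct (retract_homotopy_continuous x s Hs eps Heps) as [d [Hd Hl]].
      exists d. split; [auto | intros y r _; apply Hl].
    + intros M HM. destruct (retract_homotopy_proper M HM) as [N [HN HP]].
      exists N. split; [auto | intros x s _; apply HP].
  - apply retract_homotopy_1_Tinf.
  - intros x s Tx _. apply retract_homotopy_Tinf_fixed; auto.
Qed.
End MittagLefflerRetraction.

Lemma id_rooted_map (A B : pt -> Prop) : (forall x, A x -> B x) -> rooted_map X p A B (fun x => x).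
Proof.
  intros AB. split; [auto|]. split; [reflexivity|]. split.
  - intros x _ eps Heps. exists eps. split; auto.
  - intros S [M HM]. exists M. intros y z [_ Sy] [_ Sz]. auto.
Qed.

Lemma rooted_mp_homotopy_id (A : pt -> Prop) f : (forall x, A x -> f x = x) ->
  rooted_mp_homotopy X p A A (fun x _ => x) f (fun x => x).
Proof.
  intros Hf. split; [auto|]. split; [intros x Ax; symmetry; auto|].
  split; [reflexivity|]. split; [reflexivity|]. split.
  - intros x s _ Hs eps Heps. exists eps. split; auto.
  - intros M HM. exists M. split; auto.
Qed.

Lemma rooted_mp_homotopy_rev (A B : pt -> Prop) H f g :
  rooted_mp_homotopy X p A B H f g -> rooted_mp_homotopy X p A B (fun x s => H x (1 - s)) g f.
Proof.
  intros [HB [H0 [H1 [HR [HC HP]]]]].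
  split; [intros x s Ax Hs; apply HB; auto; lra|].
  split; [intros x Ax; rewrite Rminus_0_r; auto|].
  split; [intros x Ax; rewrite Rminus_diag; auto|].
  split; [intros s Hs; apply HR; lra|]. split.
  - intros x s Ax Hs eps Heps. destruct (HC x (1 - s) Ax ltac:(lra) eps Heps) as [d [Hd Hl]].
    exists d. split; auto. intros y r Ay Hr Dxy Dsr. apply Hl; auto. lra.
    replace (1 - s - (1 - r)) with (- (s - r)) by ring. rewrite Rabs_Ropp. auto.
  - intros M HM. destruct (HP M HM) as [N [HN HPN]]. exists N. split; auto.
    intros x s Ax Hs Hx. apply (HPN x (1 - s)); auto. lra.
Qed.

Lemma homotopy_end_rooted_map (B : pt -> Prop) H f g :
  rooted_mp_homotopy X p (Tall X) (Tall X) H f g -> (forall x, B (H x 1)) ->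
  rooted_map X p (Tall X) B (fun x => H x 1).
Proof.
  intros [_ [_ [_ [HR [HC HP]]]]] HB. split; [auto|]. split; [apply HR; lra|]. split.
  - intros x _ eps Heps. destruct (HC x 1 I ltac:(lra) eps Heps) as [d [Hd Hl]].
    exists d. split; auto. intros y _ Dxy. apply Hl; auto. exact I. lra.
    rewrite Rminus_diag, Rabs_R0. auto.
  - intros S [M0 HM0].
    destruct (classic (exists x0, S (H x0 1))) as [[x0 Hx0]|NE].
    2: { exists 0. intros y z [_ Sy]. exfalso. eauto. }
    destruct (HP (height (H x0 1) + Rabs M0 + 1)) as [N [HN HPN]].
    { pose proof (height_nonneg (H x0 1)). pose proof (Rabs_pos M0). lra. }
    assert (Bd : forall w, S (H w 1) -> height w < N).
    { intros w Sw. rewrite <- dist_root_l. apply (HPN w 1); [exact I | lra |].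
      rewrite dist_root_l. pose proof (HM0 _ _ Hx0 Sw).
      pose proof (height_le_dist (H x0 1) (H w 1)). pose proof (Rle_abs M0). lra. }
    exists (2 * N). intros y z [_ Sy] [_ Sz].
    pose proof (Bd y Sy). pose proof (Bd z Sz). pose proof (dist_le_height y z). lra.
Qed.

Lemma deformation_retraction_equivalence :
  deformation_retraction X p -> rooted_mp_homotopy_equivalence X p.
Proof.
  intros [H [HH [HT HF]]].
  exists (fun x => H x 1), (fun x => x). split; [|split; [|split]].
  - apply (homotopy_end_rooted_map _ H (fun x => x) (fun x => H x 1)); auto.
  - apply id_rooted_map. intros; exact I.
  - exists (fun x s => H x (1 - s)). apply rooted_mp_homotopy_rev. auto.
  - exists (fun x _ => x). apply rooted_mp_homotopy_id. intros x Tx. apply HF; auto. lra.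
Qed.

End Tree.

Theorem proposition7p10 (X : nat -> Type) (p : forall n, X (S n) -> X n) :
  (MittagLeffler X p <-> rooted_mp_homotopy_equivalence X p) /\
  (MittagLeffler X p -> deformation_retraction X p).
Proof.
  split; [split|].
  - intros HML. apply deformation_retraction_equivalence, ML_deformation_retraction, HML.
  - apply homotopy_equivalence_ML.
  - apply ML_deformation_retraction.
Qed.
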